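(* Let $q$ be a prime power and let $R$ be a finite ring containing the field $\mathbb{F}_q$ as a subring. Let $d=\dim_{\mathbb{F}_q}R$ (so $\#R=q^d$), let $r^*$ be the number of units of $R$, and let $v=\#\mathbb{P}(R)$ be the number of points of the chain geometry $\Sigma(\mathbb{F}_q,R)$. For $i=0,1,2,3$ let $\lambda_i$ denote the number of chains containing $i$ given mutually distant points (this number does not depend on the choice of the points). Then \[ \lambda_0=\frac{v\,q^{d-1}r^*}{q^2-1}\,\lambda_3,\qquad \lambda_1=\frac{q^{d-1}r^*}{q-1}\,\lambda_3,\qquad \lambda_2=\frac{r^*}{q-1}\,\lambda_3 . \]
   Context: All rings are associative with unit element $1\neq 0$, and subrings share the unit. $R^2$ is regarded as a left $R$-module. The projective line $\mathbb{P}(R)$ is the set of all submodules of $R^2$ of the form $R(a,b)$ where $(a\ b)$ is the first row of some invertible $2\times 2$ matrix over $R$. For a field $K\subseteq R$ (as a subring), $\mathbb{P}(K)$ is embedded in $\mathbb{P}(R)$ via $K(a,b)\mapsto R(a,b)$. The chain geometry $\Sigma(K,R)$ has point set $\mathbb{P}(R)$ and its blocks, called chains, are the sets $\mathbb{P}(K)^g$ with $g\in \mathrm{GL}_2(R)$ (acting on $R^2$ from the right). Two points $R(a,b)$, $R(c,d)$ are distant if $\begin{pmatrix}a&b\\c&d\end{pmatrix}\in\mathrm{GL}_2(R)$. In particular $\lambda_0$ is the total number of chains and $\lambda_1$ the number of chains through a given point. *)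

From HB Require Import structures.
From mathcomp Require Import all_boot all_order all_algebra.
Set Implicit Arguments. Unset Strict Implicit. Unset Printing Implicit Defensive.
Import GRing.Theory.
Local Open Scope ring_scope.

Section ChainGeometry.
Variable R : finUnitRingType.

Definition invertible2 (M : 'M[R]_2) : bool :=
  [exists N : 'M[R]_2, (M *m N == 1%:M) && (N *m M == 1%:M)].

Definition submod (a : 'rV[R]_2) : {set 'rV[R]_2} := [set x *: a | x : R].

Definition admissible (a : 'rV[R]_2) : bool :=
  [exists M : 'M[R]_2, invertible2 M && (row 0 M == a)].

Definition proj_line : {set {set 'rV[R]_2}} :=
  [set p | [exists a, admissible a && (p == submod a)]].

Definition pt_act (p : {set 'rV[R]_2}) (g : 'M[R]_2) : {set 'rV[R]_2} :=
  [set v *m g | v in p].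

Variable K : {set R}.

Definition matrix_over (M : 'M[R]_2) : bool := [forall i, forall j, M i j \in K].
Definition row_over (a : 'rV[R]_2) : bool := [forall j, a 0 j \in K].

Definition invertible2_over (M : 'M[R]_2) : bool :=
  matrix_over M &&
  [exists N : 'M[R]_2, [&& matrix_over N, M *m N == 1%:M & N *m M == 1%:M]].

(* P(K) embedded in P(R) via K(a,b) |-> R(a,b) *)
Definition base_chain : {set {set 'rV[R]_2}} :=
  [set submod a | a in [pred a : 'rV[R]_2 |
     row_over a && [exists M, invertible2_over M && (row 0 M == a)]]].

Definition chains : {set {set {set 'rV[R]_2}}} :=
  [set [set pt_act p g | p in base_chain] | g in [pred g | invertible2 g]].

Definition distant (p1 p2 : {set 'rV[R]_2}) : bool :=
  [exists a, exists c,
     [&& p1 == submod a, p2 == submod c & invertible2 (col_mx a c)]].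

Definition nchains_through (s : seq {set 'rV[R]_2}) : nat :=
  #|[set C in chains | all (fun p => p \in C) s]|.

End ChainGeometry.

Definition is_subfield (R : finUnitRingType) (K : {set R}) : Prop :=
  [/\ 1 \in K,
      (forall x y, x \in K -> y \in K -> x - y \in K),
      (forall x y, x \in K -> y \in K -> x * y \in K),
      (forall x y, x \in K -> y \in K -> x * y = y * x) &
      (forall x, x \in K -> x != 0 -> (x \is a GRing.unit) /\ x^-1 \in K)].

From mathcomp Require Import all_boot all_order all_algebra.
From mathcomp Require Import ring.
Set Implicit Arguments. Unset Strict Implicit. Unset Printing Implicit Defensive.
Import GRing.Theory Num.Theory.
Local Open Scope ring_scope.

(* GL_2(R) acts on the chain geometry and is transitive on points, on pairs of
   distant points and on triples of mutually distant points; so lambda_1,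
   lambda_2, lambda_3 are the numbers of chains through R(1,0), through R(1,0)
   and R(0,1), and through R(1,0), R(0,1), R(1,1).  A chain has q + 1 mutually
   distant points, so counting the pairs (C, x) with C a chain through i fixed
   mutually distant points and x a point of C distant from them gives
   lambda_i (q + 1 - i) = N_i lambda_(i+1), where N_i is the number of points
   distant from the i given ones: N_0 = v, N_1 = #R (the points R(x,1)) and
   N_2 = r* (the points R(u,1) with u a unit). *)

Local Notation i1 := (lift ord0 ord0).

Lemma ord2P (P : 'I_2 -> Prop) : P ord0 -> P i1 -> forall i, P i.
Proof.
move=> P0 P1 [[|[|//]] lti].
  by rewrite (_ : Ordinal lti = ord0) //; apply: val_inj.
by rewrite (_ : Ordinal lti = i1) //; apply: val_inj.
Qed.

Lemma card_setId_sum (T : finType) (A : {set T}) (P : pred T) :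
  #|[set x in A | P x]| = (\sum_(x in A) P x)%N.
Proof.
rewrite -sum1_card (eq_bigl (fun x => (x \in A) && P x)); last by move=> x; rewrite inE.
by rewrite big_mkcondr /=; apply: eq_bigr => x _; case: (P x).
Qed.

Lemma double_counting (A B : finType) (X : {set A}) (Y : {set B}) (r : A -> B -> bool) :
  (\sum_(a in X) #|[set b in Y | r a b]| = \sum_(b in Y) #|[set a in X | r a b]|)%N.
Proof.
under eq_bigr do rewrite card_setId_sum.
under [RHS]eq_bigr do rewrite card_setId_sum.
exact: exchange_big.
Qed.

Section Matrix2.
Variable R : pzRingType.

Definition row2 (x y : R) : 'rV[R]_2 := \row_(j < 2) if j == ord0 then x else y.

Definition mx2 (a b c d : R) : 'M[R]_2 :=
  \matrix_(i < 2, j < 2) if i == ord0 then (if j == ord0 then a else b)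
                         else (if j == ord0 then c else d).

Lemma row2_eta (a : 'rV[R]_2) : a = row2 (a 0 0) (a 0 i1).
Proof. by apply/matrixP=> i j; rewrite !mxE (ord1 i); elim/ord2P: j. Qed.

Lemma mx2_eta (M : 'M[R]_2) : M = mx2 (M 0 0) (M 0 i1) (M i1 0) (M i1 i1).
Proof. by apply/matrixP=> i j; rewrite !mxE; elim/ord2P: i; elim/ord2P: j. Qed.

Lemma row2_inj x y x' y' : row2 x y = row2 x' y' -> x = x' /\ y = y'.
Proof. by move/matrixP=> E; split; [move: (E 0 0) | move: (E 0 i1)]; rewrite !mxE. Qed.

Lemma mx2_inj a b c d a' b' c' d' : mx2 a b c d = mx2 a' b' c' d' ->
  [/\ a = a', b = b', c = c' & d = d'].
Proof.
move/matrixP=> E.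
by split; [move: (E 0 0) | move: (E 0 i1) | move: (E i1 0) | move: (E i1 i1)];
  rewrite !mxE.
Qed.

Lemma mul_mx2 a b c d a' b' c' d' :
  mx2 a b c d *m mx2 a' b' c' d' =
  mx2 (a * a' + b * c') (a * b' + b * d') (c * a' + d * c') (c * b' + d * d').
Proof.
apply/matrixP=> i j; rewrite !mxE !big_ord_recl big_ord0 !mxE addr0 /=.
by elim/ord2P: i; elim/ord2P: j.
Qed.

Lemma mul_row2_mx2 x y a b c d :
  row2 x y *m mx2 a b c d = row2 (x * a + y * c) (x * b + y * d).
Proof.
apply/matrixP=> i j; rewrite !mxE !big_ord_recl big_ord0 !mxE addr0 /=.
by elim/ord2P: j.
Qed.

Lemma scale_row2 u x y : u *: row2 x y = row2 (u * x) (u * y).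
Proof. by apply/matrixP=> i j; rewrite !mxE; elim/ord2P: j. Qed.

Lemma col_mx_row2 a b c d : col_mx (row2 a b) (row2 c d) = mx2 a b c d.
Proof.
apply/matrixP=> i j; elim/ord2P: i.
  by rewrite (_ : ord0 = lshift 1 (ord0 : 'I_1)) ?col_mxEu ?mxE //; apply: val_inj.
by rewrite (_ : i1 = rshift 1 (ord0 : 'I_1)) ?col_mxEd ?mxE //; apply: val_inj.
Qed.

Lemma row0_mx2 a b c d : row 0 (mx2 a b c d) = row2 a b.
Proof. by apply/matrixP=> i j; rewrite !mxE. Qed.

Lemma id_mx2 : 1%:M = mx2 1 0 0 1.
Proof. by apply/matrixP=> i j; rewrite !mxE; elim/ord2P: i; elim/ord2P: j. Qed.

Lemma mul_row10_col_mx (a c : 'rV[R]_2) : row2 1 0 *m col_mx a c = a.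
Proof.
by rewrite [a]row2_eta [c]row2_eta col_mx_row2 mul_row2_mx2 !(mul1r, mul0r, addr0, add0r).
Qed.

Lemma mul_row01_col_mx (a c : 'rV[R]_2) : row2 0 1 *m col_mx a c = c.
Proof.
by rewrite [a]row2_eta [c]row2_eta col_mx_row2 mul_row2_mx2 !(mul1r, mul0r, addr0, add0r).
Qed.

End Matrix2.

Lemma finring_linv_unit (R : finUnitRingType) (x y : R) : y * x = 1 -> x \is a GRing.unit.
Proof.
move=> yx1.
have mulx_inj : injective (fun z : R => x * z).
  by move=> z1 z2 /= /(congr1 (fun t => y * t)); rewrite !mulrA yx1 !mul1r.
have [g _ gK] := injF_bij mulx_inj.
have xg1 : x * g 1 = 1 by exact: gK.
have y_eq : y = g 1 by rewrite -[y]mulr1 -{1}xg1 mulrA yx1 mul1r.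
by apply/unitrP; exists y; rewrite yx1 y_eq xg1.
Qed.

Section ProjectiveLine.
Variable R : finUnitRingType.
Implicit Types (b u w x y : R) (a c : 'rV[R]_2) (M N g : 'M[R]_2) (p : {set 'rV[R]_2}).

Lemma invertible2P M : reflect (exists N, M *m N = 1%:M /\ N *m M = 1%:M) (invertible2 M).
Proof.
apply: (iffP existsP) => [[N /andP[/eqP MN /eqP NM]]|[N [MN NM]]]; exists N => //.
by rewrite MN NM !eqxx.
Qed.

Lemma invertible2_intro M N : M *m N = 1%:M -> N *m M = 1%:M -> invertible2 M.
Proof. by move=> MN NM; apply/invertible2P; exists N. Qed.

Lemma invertible2_mul M N : invertible2 M -> invertible2 N -> invertible2 (M *m N).
Proof.
case/invertible2P=> M' [MM' M'M] /invertible2P[N' [NN' N'N]].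
apply: (@invertible2_intro _ (N' *m M')).
  by rewrite mulmxA -(mulmxA M) NN' mulmx1 MM'.
by rewrite mulmxA -(mulmxA N') M'M mulmx1 N'N.
Qed.

Lemma invertible2_1 : invertible2 (1%:M : 'M[R]_2).
Proof. by apply: (@invertible2_intro _ 1%:M); rewrite mulmx1. Qed.

Lemma invertible2_upper u b w : u \is a GRing.unit -> w \is a GRing.unit ->
  invertible2 (mx2 u b 0 w).
Proof.
move=> Uu Uw; apply: (@invertible2_intro _ (mx2 u^-1 (- (u^-1 * b * w^-1)) 0 w^-1));
  rewrite mul_mx2 id_mx2 !(mulr0, mul0r, addr0, add0r).
  by rewrite !mulrV // mulrN !mulrA mulrV // mul1r addNr.
by rewrite !mulVr // mulNr divrK // addrN.
Qed.

Lemma invertible2_lower x : invertible2 (mx2 1 0 x 1).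
Proof.
apply: (@invertible2_intro _ (mx2 1 0 (- x) 1 : 'M[R]_2));
  by rewrite mul_mx2 id_mx2 !(mulr0, mul0r, addr0, add0r, mulr1, mul1r) ?addrN ?addNr.
Qed.

Lemma invertible2_swap : invertible2 (mx2 (0 : R) 1 1 0).
Proof.
by apply: (@invertible2_intro _ (mx2 0 1 1 0 : 'M[R]_2));
  rewrite mul_mx2 id_mx2 !(mulr0, mul0r, addr0, add0r, mulr1, mul1r).
Qed.

Lemma invertible2_swap_upper b x : x \is a GRing.unit -> invertible2 (mx2 0 1 x b).
Proof.
move=> Ux; rewrite (_ : mx2 _ _ _ _ = mx2 0 1 1 0 *m mx2 x b 0 1).
  by apply: invertible2_mul; rewrite ?invertible2_swap ?invertible2_upper ?unitr1.
by rewrite mul_mx2 !(mul0r, mul1r, add0r, addr0).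
Qed.

Lemma invertible2_10_unit x y : invertible2 (mx2 1 0 x y) -> y \is a GRing.unit.
Proof.
case/invertible2P=> N []; rewrite [N]mx2_eta !mul_mx2 id_mx2.
case/mx2_inj=> _ N01 _ yN; case/mx2_inj=> _ _ _ Ny.
move: N01 yN Ny; rewrite !(mul1r, mul0r, mulr0, addr0, add0r) => ->.
by rewrite mulr0 add0r => yN Ny; apply/unitrP; exists (N i1 i1); split.
Qed.

Lemma invertible2_01_unit x y : invertible2 (mx2 0 1 x y) -> x \is a GRing.unit.
Proof.
case/invertible2P=> N []; rewrite [N]mx2_eta !mul_mx2 id_mx2.
case/mx2_inj=> _ N11 _ xN; case/mx2_inj=> Nx _ _ _.
move: N11 xN Nx; rewrite !(mul1r, mul0r, mulr0, addr0, add0r) => ->.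
by rewrite mulr0 addr0 => xN Nx; apply/unitrP; exists (N 0 i1); split.
Qed.

Lemma not_invertible2_col_mx_same a : ~~ invertible2 (col_mx a a).
Proof.
apply/invertible2P=> -[N [+ _]].
rewrite [a]row2_eta col_mx_row2 [N]mx2_eta mul_mx2 id_mx2 => /mx2_inj[e1 _ e0 _].
by move: (oner_neq0 R); rewrite -e1 e0 eqxx.
Qed.

Lemma submodP a c : reflect (exists x, c = x *: a) (c \in submod a).
Proof. by apply: (iffP imsetP) => -[x]; exists x. Qed.

Lemma mem_submod a : a \in submod a.
Proof. by apply/submodP; exists 1; rewrite scale1r. Qed.

Lemma submodZ u a : u \is a GRing.unit -> submod (u *: a) = submod a.
Proof.
move=> Uu; apply/setP=> c; apply/submodP/submodP=> -[x ->].
  by exists (x * u); rewrite scalerA.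
by exists (x * u^-1); rewrite scalerA mulrVK.
Qed.

Lemma pt_act_submod a g : pt_act (submod a) g = submod (a *m g).
Proof.
apply/setP=> c; apply/imsetP/submodP => [[_ /submodP[x ->] ->]|[x ->]].
  by exists x; rewrite scalemxAl.
by exists (x *: a); [apply/submodP; exists x | rewrite scalemxAl].
Qed.

Lemma pt_actM p M N : pt_act (pt_act p M) N = pt_act p (M *m N).
Proof. by rewrite /pt_act -imset_comp; apply: eq_imset => c /=; rewrite mulmxA. Qed.

Lemma pt_act1 p : pt_act p 1%:M = p.
Proof. by rewrite /pt_act (eq_imset (g := id)) ?imset_id // => c; apply: mulmx1. Qed.

Lemma pt_act_inj g : invertible2 g -> injective (fun p => pt_act p g).
Proof.
case/invertible2P=> N [gN _] p p' /(congr1 (fun p => pt_act p N)) /=.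
by rewrite !pt_actM gN !pt_act1.
Qed.

Lemma admissibleP a : reflect (exists2 M, invertible2 M & row 0 M = a) (admissible a).
Proof.
by apply: (iffP existsP) => [[M /andP[? /eqP]]|[M ? <-]]; exists M; rewrite ?eqxx ?andbT.
Qed.

Lemma admissible_mul a g : admissible a -> invertible2 g -> admissible (a *m g).
Proof.
case/admissibleP=> M invM <- invg; apply/admissibleP; exists (M *m g); last exact: row_mul.
exact: invertible2_mul.
Qed.

Lemma admissible_row2 x y (z w : R) : invertible2 (mx2 x y z w) -> admissible (row2 x y).
Proof. by move=> invM; apply/admissibleP; exists (mx2 x y z w); rewrite ?row0_mx2. Qed.

Lemma admissible_neq0 a : admissible a -> a != 0.
Proof.
case/admissibleP=> M /invertible2P[N [MN _]] <-; apply/eqP=> M0.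
have : row 0 (M *m N) = 0 by rewrite row_mul M0 mul0mx.
rewrite MN id_mx2 row0_mx2 => /matrixP/(_ 0 0); rewrite !mxE /=.
exact/eqP/oner_neq0.
Qed.

Lemma submod_eq_unit a c : admissible a -> submod a = submod c ->
  exists2 u, u \is a GRing.unit & c = u *: a.
Proof.
case/admissibleP=> M /invertible2P[N [MN _]] Ma ac.
have /submodP[x cxa] : c \in submod a by rewrite ac mem_submod.
have /submodP[y ayc] : a \in submod c by rewrite -ac mem_submod.
exists x => //; apply: (@finring_linv_unit _ x y).
have : (y * x) *: (a *m N) = a *m N by rewrite scalemxAl -scalerA -cxa -ayc.
rewrite -Ma -row_mul MN id_mx2 row0_mx2 scale_row2.
by case/row2_inj; rewrite mulr1.
Qed.

Lemma distant_submod a c : distant (submod a) (submod c) = invertible2 (col_mx a c).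
Proof.
apply/idP/idP => [|invac]; last first.
  by apply/existsP; exists a; apply/existsP; exists c; rewrite !eqxx invac.
case/existsP=> a' /existsP[c' /and3P[/eqP aa' /eqP cc' inv']].
rewrite [a']row2_eta [c']row2_eta col_mx_row2 in inv'.
have adm_a' : admissible a' by rewrite [a']row2_eta; apply: admissible_row2 inv'.
have adm_c' : admissible c'.
  have := invertible2_mul invertible2_swap inv'.
  rewrite mul_mx2 !(mul0r, mul1r, add0r, addr0) => inv_c.
  by rewrite [c']row2_eta; apply: admissible_row2 inv_c.
have [u Uu ->] := submod_eq_unit adm_a' (esym aa').
have [w Uw ->] := submod_eq_unit adm_c' (esym cc').
rewrite (_ : col_mx (u *: a') (w *: c') =
             mx2 u 0 0 w *m mx2 (a' 0 0) (a' 0 i1) (c' 0 0) (c' 0 i1)).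
  exact/invertible2_mul/inv'/invertible2_upper.
rewrite [a']row2_eta [c']row2_eta !scale_row2 col_mx_row2 mul_mx2 !mxE /=.
by rewrite !(mul0r, add0r, addr0).
Qed.

Lemma proj_lineP p : reflect (exists2 a, admissible a & p = submod a) (p \in proj_line R).
Proof.
rewrite inE; apply: (iffP existsP) => [[a /andP[? /eqP ->]]|[a ? ->]]; exists a => //.
by apply/andP.
Qed.

Lemma distant_irrefl p : ~~ distant p p.
Proof.
apply/negP=> pp; have /existsP[a /existsP[c /and3P[/eqP pa _ _]]] := pp.
by move: pp; rewrite pa distant_submod (negbTE (not_invertible2_col_mx_same a)).
Qed.

Lemma distant_neq p1 p2 : distant p1 p2 -> p1 != p2.
Proof. by apply: contraTneq => ->; apply: distant_irrefl. Qed.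

Definition pt10 := submod (row2 (1 : R) 0).
Definition pt01 := submod (row2 (0 : R) 1).
Definition pt11 := submod (row2 (1 : R) 1).

Lemma proj_line_pt10_orbit p : p \in proj_line R ->
  exists2 g, invertible2 g & p = pt_act pt10 g.
Proof.
case/proj_lineP=> a /admissibleP[M invM <-] ->; exists M => //.
by rewrite pt_act_submod -(row0_mx2 1 0 0 1) -id_mx2 -row_mul mul1mx.
Qed.

Lemma distant_pt10_pt01_orbit p1 p2 : distant p1 p2 ->
  exists2 g, invertible2 g & p1 = pt_act pt10 g /\ p2 = pt_act pt01 g.
Proof.
case/existsP=> a /existsP[c /and3P[/eqP -> /eqP -> invac]]; exists (col_mx a c) => //.
by rewrite !pt_act_submod mul_row10_col_mx mul_row01_col_mx.
Qed.

(* With M = col_mx a c sending R(1,0), R(0,1) to p1, p2, a third point distant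
   from both is R(x, y) M with x, y units; rescaling the rows of M by x and y
   moves R(1,1) onto it. *)
Lemma distant3_pt10_pt01_pt11_orbit p1 p2 p3 :
  distant p1 p2 -> distant p1 p3 -> distant p2 p3 ->
  exists2 g, invertible2 g &
    [/\ p1 = pt_act pt10 g, p2 = pt_act pt01 g & p3 = pt_act pt11 g].
Proof.
case/existsP=> a /existsP[c /and3P[/eqP p1a /eqP p2c invac]] d13 d23.
have /existsP[_ /existsP[e /and3P[_ /eqP p3e _]]] := d13.
move: d13 d23; rewrite p1a p2c p3e !distant_submod => inv13 inv23.
have [N [acN Nac]] := invertible2P _ invac.
have invN : invertible2 N by apply: (invertible2_intro Nac acN).
have aN : a *m N = row2 1 0 by rewrite -{1}(mul_row10_col_mx a c) -mulmxA acN mulmx1.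
have cN : c *m N = row2 0 1 by rewrite -{1}(mul_row01_col_mx a c) -mulmxA acN mulmx1.
have := invertible2_mul inv13 invN; have := invertible2_mul inv23 invN.
rewrite !(@mul_col_mx _ 1 1 2 2) aN cN [e *m N]row2_eta !col_mx_row2.
set x := (e *m N) 0 0; set y := (e *m N) 0 i1.
move=> /invertible2_01_unit Ux /invertible2_10_unit Uy.
exists (mx2 x 0 0 y *m col_mx a c); first exact/invertible2_mul/invac/invertible2_upper.
rewrite /pt10 /pt01 /pt11 !pt_act_submod !mulmxA !mul_row2_mx2.
rewrite !(mul1r, mul0r, addr0, add0r); split.
- have -> : row2 x 0 = x *: row2 1 0 by rewrite scale_row2 mulr1 mulr0.
  by rewrite -scalemxAl mul_row10_col_mx submodZ.
- have -> : row2 0 y = y *: row2 0 1 by rewrite scale_row2 mulr1 mulr0.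
  by rewrite -scalemxAl mul_row01_col_mx submodZ.
- by rewrite /x /y -row2_eta -mulmxA Nac mulmx1.
Qed.

Definition distant_from (s : seq {set 'rV[R]_2}) : {set {set 'rV[R]_2}} :=
  [set p in proj_line R | all (fun p0 => distant p0 p) s].

Lemma in_distant_from p s :
  (p \in distant_from s) = (p \in proj_line R) && all (fun p0 => distant p0 p) s.
Proof. by rewrite in_set. Qed.

Lemma distant_from_nil : distant_from [::] = proj_line R.
Proof. by apply/setP=> p; rewrite in_distant_from andbT. Qed.

Lemma distant_pt10_pt01 : distant pt10 pt01.
Proof. by rewrite distant_submod col_mx_row2 -id_mx2 invertible2_1. Qed.

Lemma admissible_row2_x1 x : admissible (row2 x 1).
Proof.
apply: (@admissible_row2 _ _ 1 0).
rewrite (_ : mx2 x 1 1 0 = mx2 0 1 1 0 *m mx2 1 0 x 1).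
  exact: invertible2_mul invertible2_swap (invertible2_lower x).
by rewrite mul_mx2 !(mul0r, mul1r, add0r, addr0).
Qed.

Lemma submod_row2_x1_inj : injective (fun x => submod (row2 x 1)).
Proof.
move=> x y /= /(submod_eq_unit (admissible_row2_x1 x))[u _].
by rewrite scale_row2 mulr1 => /row2_inj[-> <-]; rewrite mul1r.
Qed.

Lemma distant_from_pt10E : distant_from [:: pt10] = [set submod (row2 x 1) | x in [set: R]].
Proof.
apply/setP=> p; rewrite in_distant_from /= andbT; apply/andP/imsetP.
  case=> /proj_lineP[c _ ->]; rewrite distant_submod [c]row2_eta col_mx_row2.
  move=> /invertible2_10_unit Uc; exists ((c 0 i1)^-1 * c 0 0) => //.
  have Uc' : (c 0 i1)^-1 \is a GRing.unit by rewrite unitrV.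
  by rewrite -(submodZ _ Uc') scale_row2 mulVr.
case=> x _ ->; split.
  by apply/proj_lineP; exists (row2 x 1); rewrite ?admissible_row2_x1.
by rewrite distant_submod col_mx_row2 invertible2_lower.
Qed.

Lemma card_distant_from_pt10 : #|distant_from [:: pt10]| = #|R|.
Proof. by rewrite distant_from_pt10E card_imset ?cardsT //; apply: submod_row2_x1_inj. Qed.

Lemma distant_pt01_row2_x1 x : distant pt01 (submod (row2 x 1)) = (x \is a GRing.unit).
Proof.
rewrite distant_submod col_mx_row2.
by apply/idP/idP => [/invertible2_01_unit | /invertible2_swap_upper].
Qed.

Lemma card_distant_from_pt10_pt01 :
  #|distant_from [:: pt10; pt01]| = #|[set x : R | x \is a GRing.unit]|.
Proof.
rewrite -(card_imset _ submod_row2_x1_inj); apply: eq_card => p.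
have -> : p \in distant_from [:: pt10; pt01] =
          (p \in distant_from [:: pt10]) && distant pt01 p.
  by rewrite !in_distant_from /= !andbT andbA.
rewrite distant_from_pt10E; apply/andP/imsetP.
  by case=> /imsetP[x _ ->]; rewrite distant_pt01_row2_x1 => Ux; exists x; rewrite ?inE.
case=> x; rewrite inE => Ux ->; rewrite distant_pt01_row2_x1.
by split => //; apply/imsetP; exists x.
Qed.

End ProjectiveLine.

Section Chains.
Variables (R : finUnitRingType) (K : {set R}).
Implicit Types (x y : R) (a : 'rV[R]_2) (g : 'M[R]_2) (p : {set 'rV[R]_2})
  (C : {set {set 'rV[R]_2}}) (s : seq {set 'rV[R]_2}).

Definition chain_act C g := [set pt_act p g | p in C].

Lemma chain_actM C M N : chain_act (chain_act C M) N = chain_act C (M *m N).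
Proof. by rewrite /chain_act -imset_comp; apply: eq_imset => p /=; rewrite pt_actM. Qed.

Lemma chain_act1 C : chain_act C 1%:M = C.
Proof. by rewrite /chain_act (eq_imset (g := id)) ?imset_id // => p; apply: pt_act1. Qed.

Lemma chains_act C g : C \in chains K -> invertible2 g -> chain_act C g \in chains K.
Proof.
case/imsetP=> h; rewrite inE => invh -> invg.
rewrite -[[set pt_act p h | p in _]]/(chain_act (base_chain K) h) chain_actM.
by apply/imsetP; exists (h *m g); rewrite ?inE ?invertible2_mul.
Qed.

Lemma nchains_through_act g s : invertible2 g ->
  nchains_through K [seq pt_act p g | p <- s] = nchains_through K s.
Proof.
move=> invg; have [N [gN Ng]] := invertible2P _ invg.
have invN : invertible2 N := invertible2_intro Ng gN.
have act_inj : injective (chain_act^~ g) by apply/imset_inj/pt_act_inj.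
have all_act C : all (fun p => p \in chain_act C g) [seq pt_act p g | p <- s] =
                 all (fun p => p \in C) s.
  by rewrite all_map; apply: eq_all => p /=; rewrite (mem_imset _ _ (pt_act_inj invg)).
rewrite /nchains_through -[in RHS](card_imset _ act_inj); apply: eq_card => C'.
rewrite [in LHS]inE; apply/andP/imsetP => [[C'_chain C'_all]|[C]].
  exists (chain_act C' N); last by rewrite chain_actM Ng chain_act1.
  by rewrite inE chains_act // -all_act chain_actM Ng chain_act1.
by rewrite inE => /andP[C_chain C_all] ->; rewrite chains_act ?all_act.
Qed.

Lemma nchains_through1E p : p \in proj_line R ->
  nchains_through K [:: p] = nchains_through K [:: pt10 R].
Proof.
by case/proj_line_pt10_orbit=> g invg ->; rewrite -(nchains_through_act [:: pt10 R] invg).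
Qed.

Lemma nchains_through2E p1 p2 : distant p1 p2 ->
  nchains_through K [:: p1; p2] = nchains_through K [:: pt10 R; pt01 R].
Proof.
case/distant_pt10_pt01_orbit=> g invg [-> ->].
by rewrite -(nchains_through_act [:: pt10 R; pt01 R] invg).
Qed.

Lemma nchains_through3E p1 p2 p3 : distant p1 p2 -> distant p1 p3 -> distant p2 p3 ->
  nchains_through K [:: p1; p2; p3] = nchains_through K [:: pt10 R; pt01 R; pt11 R].
Proof.
move=> d12 d13 d23; have [g invg [-> -> ->]] := distant3_pt10_pt01_pt11_orbit d12 d13 d23.
by rewrite -(nchains_through_act [:: pt10 R; pt01 R; pt11 R] invg).
Qed.

Lemma nchains_through_nil : nchains_through K [::] = #|chains K|.
Proof. by apply: eq_card => C; rewrite inE andbT. Qed.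

Hypothesis subK : is_subfield K.

Lemma subfield1 : 1 \in K. Proof. by case: subK. Qed.

Lemma subfieldB x y : x \in K -> y \in K -> x - y \in K.
Proof. by case: subK => _ KB _ _ _; apply: KB. Qed.

Lemma subfieldM x y : x \in K -> y \in K -> x * y \in K.
Proof. by case: subK => _ _ KM _ _; apply: KM. Qed.

Lemma subfieldV x : x \in K -> x != 0 -> (x \is a GRing.unit) /\ x^-1 \in K.
Proof. by case: subK => _ _ _ _ KV; apply: KV. Qed.

Lemma subfield0 : 0 \in K. Proof. by rewrite -(subrr 1) subfieldB ?subfield1. Qed.

Lemma subfieldN x : x \in K -> - x \in K.
Proof. by move=> Kx; rewrite -sub0r subfieldB ?subfield0. Qed.

Lemma subfield_card_gt1 : (1 < #|K|)%N.
Proof. by apply/card_gt1P; exists 0, 1; rewrite subfield0 subfield1 eq_sym oner_neq0. Qed.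

(* Representatives (0,1) and (1,k), k in K, of the q + 1 points of P(K). *)
Definition base_reps : {set 'rV[R]_2} := row2 0 1 |: [set row2 1 k | k in K].

Lemma base_repsP a :
  reflect (a = row2 0 1 \/ exists2 k, k \in K & a = row2 1 k) (a \in base_reps).
Proof.
apply: (iffP setU1P) => -[->|]; rewrite ?eqxx; try by left.
  by case/imsetP=> k Kk ->; right; exists k.
by case=> k Kk ->; right; apply/imsetP; exists k.
Qed.

Lemma card_base_reps : #|base_reps| = #|K|.+1.
Proof.
rewrite cardsU1 card_imset; last by move=> k k' /row2_inj[].
suff -> : row2 0 1 \notin [set row2 1 k | k in K] by [].
by apply/imsetP=> -[k _ /row2_inj[e _]]; move: (oner_neq0 R); rewrite e eqxx.
Qed.

Lemma base_reps_invertible a c : a \in base_reps -> c \in base_reps -> a != c ->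
  invertible2 (col_mx a c).
Proof.
case/base_repsP=> [->|[k Kk ->]] /base_repsP[->|[k' Kk' ->]]; rewrite ?eqxx //.
- by move=> _; rewrite col_mx_row2 invertible2_swap_upper ?unitr1.
- by move=> _; rewrite col_mx_row2 invertible2_upper ?unitr1.
move=> kk'; have k'k : k' - k != 0.
  by apply: contraNneq kk'; move/eqP; rewrite subr_eq0 => /eqP ->.
have [Uk'k _] := subfieldV (subfieldB Kk' Kk) k'k.
rewrite col_mx_row2 (_ : mx2 _ _ _ _ = mx2 1 0 1 1 *m mx2 1 k 0 (k' - k)).
  exact/invertible2_mul/invertible2_upper/Uk'k/unitr1/invertible2_lower.
by rewrite mul_mx2 !(mul0r, mul1r, add0r, addr0) addrC subrK.
Qed.

Lemma base_reps_admissible a : a \in base_reps -> admissible a.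
Proof.
case/base_repsP=> [->|[k _ ->]].
  exact: admissible_row2 (invertible2_swap R).
by apply: (@admissible_row2 _ _ _ 0 1); rewrite invertible2_upper ?unitr1.
Qed.

Lemma matrix_over_mx2 (a b c d : R) : a \in K -> b \in K -> c \in K -> d \in K ->
  matrix_over K (mx2 a b c d).
Proof.
move=> Ka Kb Kc Kd; apply/forallP=> i; apply/forallP=> j; rewrite mxE.
by elim/ord2P: i; elim/ord2P: j.
Qed.

Lemma invertible2_over_invertible2 M : invertible2_over K M -> invertible2 M.
Proof. by case/andP=> _ /existsP[N /and3P[_ MN NM]]; apply/existsP; exists N; rewrite MN. Qed.

Lemma row_over_submod_base_reps a : row_over K a -> a != 0 ->
  exists2 n, n \in base_reps & submod a = submod n.
Proof.
move=> /forallP Ka; rewrite [a]row2_eta => a_neq0.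
have [a0 | a0] := eqVneq (a 0 0) 0.
  have a1 : a 0 i1 != 0.
    apply: contraNneq a_neq0 => a1; rewrite a0 a1.
    by apply/eqP/matrixP=> i j; rewrite !mxE; elim/ord2P: j.
  have [Ua1 _] := subfieldV (Ka i1) a1.
  exists (row2 0 1); first by apply/base_repsP; left.
  by rewrite (_ : row2 _ _ = a 0 i1 *: row2 0 1) ?submodZ // scale_row2 mulr0 mulr1 a0.
have [Ua0 Kinva0] := subfieldV (Ka 0) a0.
exists (row2 1 ((a 0 0)^-1 * a 0 i1)).
  by apply/base_repsP; right; exists ((a 0 0)^-1 * a 0 i1); rewrite ?subfieldM ?Ka.
by rewrite -[in RHS](submodZ _ Ua0) scale_row2 mulr1 mulVKr.
Qed.

Lemma invertible2_over_intro M N : matrix_over K M -> matrix_over K N ->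
  M *m N = 1%:M -> N *m M = 1%:M -> invertible2_over K M.
Proof.
move=> KM KN MN NM; rewrite /invertible2_over KM.
by apply/existsP; exists N; rewrite KN MN NM !eqxx.
Qed.

Lemma base_reps_base_chain n : n \in base_reps ->
  row_over K n && [exists M, invertible2_over K M && (row 0 M == n)].
Proof.
have rowK x y : x \in K -> y \in K -> row_over K (row2 x y).
  by move=> Kx Ky; apply/forallP=> j; rewrite mxE; elim/ord2P: j.
have [K0 K1] := (subfield0, subfield1).
case/base_repsP=> [->|[k Kk ->]]; rewrite rowK //=; apply/existsP.
  exists (mx2 0 1 1 0); rewrite row0_mx2 eqxx andbT.
  apply: (@invertible2_over_intro _ (mx2 0 1 1 0)); rewrite ?matrix_over_mx2 //;
    by rewrite mul_mx2 id_mx2 !(mul0r, mul1r, mulr0, mulr1, add0r, addr0).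
exists (mx2 1 k 0 1); rewrite row0_mx2 eqxx andbT.
apply: (@invertible2_over_intro _ (mx2 1 (- k) 0 1)); rewrite ?matrix_over_mx2 ?subfieldN //;
  by rewrite mul_mx2 id_mx2 !(mul0r, mul1r, mulr0, mulr1, add0r, addr0) ?addNr ?subrr.
Qed.

Lemma base_chainE : base_chain K = [set submod n | n in base_reps].
Proof.
apply/setP=> p; apply/imsetP/imsetP => -[a + ->]; last first.
  by move=> /base_reps_base_chain n_base; exists a; rewrite ?inE.
rewrite inE => /andP[Ka /existsP[M /andP[/invertible2_over_invertible2 invM /eqP Ma]]].
have a_neq0 : a != 0 by apply: admissible_neq0; apply/admissibleP; exists M.
by have [n ? ->] := row_over_submod_base_reps Ka a_neq0; exists n.
Qed.

Lemma chainsP C : C \in chains K ->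
  exists2 g, invertible2 g & C = [set submod (n *m g) | n in base_reps].
Proof.
case/imsetP=> g; rewrite inE => invg ->; exists g => //.
by rewrite base_chainE -imset_comp; apply: eq_imset => n; apply: pt_act_submod.
Qed.

Lemma chain_sub_proj_line C p : C \in chains K -> p \in C -> p \in proj_line R.
Proof.
case/chainsP=> g invg -> /imsetP[n n_base ->]; apply/proj_lineP; exists (n *m g) => //.
exact/admissible_mul/invg/base_reps_admissible.
Qed.

Lemma distant_base_reps_mul g n n' : invertible2 g ->
  n \in base_reps -> n' \in base_reps -> n != n' ->
  distant (submod (n *m g)) (submod (n' *m g)).
Proof.
move=> invg n_base n'_base nn'; rewrite distant_submod -mul_col_mx.
exact/invertible2_mul/invg/base_reps_invertible.
Qed.

Lemma chain_distantE C p p' : C \in chains K -> p \in C -> p' \in C ->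
  distant p p' = (p' != p).
Proof.
case/chainsP=> g invg -> /imsetP[n n_base ->] /imsetP[n' n'_base ->].
apply/idP/idP => [|nn']; first by apply: contraTneq => ->; apply: distant_irrefl.
by apply: distant_base_reps_mul; rewrite // eq_sym; apply: contraNneq nn' => ->.
Qed.

Lemma card_chain C : C \in chains K -> #|C| = #|K|.+1.
Proof.
case/chainsP=> g invg ->; rewrite card_in_imset ?card_base_reps // => n n' n_base n'_base.
move=> E; apply/eqP/contraT => nn'.
move: (distant_base_reps_mul invg n_base n'_base nn').
by rewrite E (negbTE (distant_irrefl _)).
Qed.

Lemma nchains_through_flags s n : uniq s ->
  {in distant_from s, forall p, nchains_through K (rcons s p) = n} ->
  (nchains_through K s * (#|K|.+1 - size s) = #|distant_from s| * n)%N.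
Proof.
move=> s_uniq n_const.
have := double_counting [set C in chains K | all (fun p => p \in C) s] (proj_line R)
  (fun C p => (p \in C) && all (fun p0 => distant p0 p) s).
rewrite (eq_bigr (fun _ => #|K|.+1 - size s)%N) => [|C]; last first.
  rewrite inE => /andP[C_chain sC].
  transitivity #|C :\: [set p in s]|.
    apply: eq_card => p; rewrite in_setD [p \in [set _ in s]]inE [LHS]in_set.
    case pC: (p \in C); rewrite ?andbF //= (chain_sub_proj_line C_chain pC).
    rewrite -has_pred1 -all_predC /= andbT; apply: eq_in_all => p0 s_p0 /=.
    by rewrite (chain_distantE C_chain (allP sC p0 s_p0) pC) eq_sym.
  rewrite cardsDS; last by apply/subsetP => p; rewrite inE => /(allP sC).
  by rewrite card_chain // cardsE; move/card_uniqP: s_uniq => ->.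
rewrite sum_nat_const => ->.
rewrite (eq_bigr (fun p => all (fun p0 => distant p0 p) s * n)%N) => [|p p_proj].
  by rewrite -big_distrl /= -card_setId_sum.
case p_dist: (all _ s); last by rewrite mul0n; apply: eq_card0 => C; rewrite !inE !andbF.
rewrite mul1n -(n_const p) ?in_distant_from ?p_proj ?p_dist //; apply: eq_card => C.
by rewrite !inE all_rcons andbT andbAC andbA.
Qed.

Lemma card_chains_flags :
  (#|chains K| * #|K|.+1 = #|proj_line R| * nchains_through K [:: pt10 R])%N.
Proof.
have := @nchains_through_flags [::] (nchains_through K [:: pt10 R]) isT.
rewrite subn0 nchains_through_nil distant_from_nil; apply=> p.
exact: nchains_through1E.
Qed.

Lemma nchains_through_pt10_flags :
  (nchains_through K [:: pt10 R] * #|K| = #|R| * nchains_through K [:: pt10 R; pt01 R])%N.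
Proof.
have := @nchains_through_flags [:: pt10 R] (nchains_through K [:: pt10 R; pt01 R]) isT.
rewrite subSS subn0 card_distant_from_pt10; apply=> p.
rewrite in_distant_from => /and3P[_ d _].
exact: nchains_through2E d.
Qed.

Lemma nchains_through_pt10_pt01_flags :
  (nchains_through K [:: pt10 R; pt01 R] * #|K|.-1 =
   #|[set x : R | x \is a GRing.unit]| * nchains_through K [:: pt10 R; pt01 R; pt11 R])%N.
Proof.
have uniq12 : uniq [:: pt10 R; pt01 R].
  by rewrite cons_uniq mem_seq1 distant_neq ?distant_pt10_pt01.
have := nchains_through_flags (n := nchains_through K [:: pt10 R; pt01 R; pt11 R]) uniq12.
rewrite subSS subn1 card_distant_from_pt10_pt01; apply=> p.
rewrite in_distant_from => /and3P[_ d1 /andP[d2 _]].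
exact: nchains_through3E (distant_pt10_pt01 R) d1 d2.
Qed.

End Chains.

Lemma flag_count_ratios (F : numFieldType) (q d v rstar l0 l1 l2 l3 : nat) :
  (1 < q)%N -> (0 < d)%N ->
  (l0 * q.+1 = v * l1)%N -> (l1 * q = q ^ d * l2)%N -> (l2 * q.-1 = rstar * l3)%N ->
  [/\ (l0%:R : F) = (v * q ^ d.-1 * rstar)%:R / ((q ^ 2)%:R - 1) * l3%:R,
      (l1%:R : F) = (q ^ d.-1 * rstar)%:R / (q%:R - 1) * l3%:R &
      (l2%:R : F) = rstar%:R / (q%:R - 1) * l3%:R].
Proof.
move=> q_gt1 d_gt0 E0 E1 E2.
have l1E : l1 = (q ^ d.-1 * l2)%N.
  apply/eqP; rewrite -(@eqn_pmul2l q) ?(ltn_trans _ q_gt1) //.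
  by rewrite mulnA -expnS prednK // mulnC E1.
have qB1_neq0 : (q%:R : F) - 1 != 0 by rewrite subr_eq0 pnatr_eq1 gtn_eqF.
have qD1_neq0 : (q%:R : F) + 1 != 0 by rewrite natr1 pnatr_eq0.
have l2E : (l2%:R : F) = rstar%:R * l3%:R / (q%:R - 1).
  by rewrite -natrM -E2 natrM -subn1 natrB ?(ltnW q_gt1) // mulfK.
have l0E : (l0%:R : F) = v%:R * l1%:R / (q%:R + 1).
  by rewrite -natrM -E0 natrM -addn1 natrD mulfK.
have q2B1_neq0 : (q%:R : F) ^+ 2 - 1 != 0.
  have -> : (q%:R : F) ^+ 2 - 1 = (q%:R - 1) * (q%:R + 1) by ring.
  exact: mulf_neq0.
rewrite l0E l1E natrM l2E !natrM !natrX; split; field => //.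
by rewrite -expr2 q2B1_neq0 qD1_neq0 qB1_neq0.
Qed.

Theorem mainTheorem1 (R : finUnitRingType) (K : {set R}) (d : nat) :
  is_subfield K ->
  #|R| = (#|K| ^ d)%N ->
  let q := #|K| in
  let rstar := #|[set x : R | x \is a GRing.unit]| in
  let v := #|proj_line R| in
  forall (p : {set 'rV[R]_2}) (p1 p2 t1 t2 t3 : {set 'rV[R]_2}),
  p \in proj_line R ->
  distant p1 p2 ->
  distant t1 t2 -> distant t1 t3 -> distant t2 t3 ->
  let lambda0 := #|chains K| in
  let lambda1 := nchains_through K [:: p] in
  let lambda2 := nchains_through K [:: p1; p2] in
  let lambda3 := nchains_through K [:: t1; t2; t3] in
  [/\ (lambda0%:R : rat) =
        (v * q ^ d.-1 * rstar)%:R / ((q ^ 2)%:R - 1) * lambda3%:R,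
      (lambda1%:R : rat) = (q ^ d.-1 * rstar)%:R / (q%:R - 1) * lambda3%:R &
      (lambda2%:R : rat) = rstar%:R / (q%:R - 1) * lambda3%:R].
Proof.
move=> subK cardR q rstar v p p1 p2 t1 t2 t3 p_proj d12 dt12 dt13 dt23 l0 l1 l2 l3.
have q_gt1 : (1 < q)%N := subfield_card_gt1 subK.
have d_gt0 : (0 < d)%N.
  by case: d cardR => // cardR; move: (leq_trans q_gt1 (max_card K)); rewrite cardR.
rewrite /l1 /l2 /l3 (nchains_through1E K p_proj) (nchains_through2E K d12).
rewrite (nchains_through3E K dt12 dt13 dt23).
apply: flag_count_ratios => //.
- exact: card_chains_flags.
- by rewrite -cardR; apply: nchains_through_pt10_flags.
- exact: nchains_through_pt10_pt01_flags.
Qed.
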